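(* Let $N\ge1$, let $G$ be a group, and let $\mathbf r:G\to \mathrm U(N)$ be a unitary representation of $G$ acting on the $N$ Higgs doublets $\Phi_1,\dots,\Phi_N$ by $\Phi_i\mapsto \mathbf r(g)_{ij}\Phi_j$. Consider the general $N$-Higgs-doublet potential $V_H=\mu_{ij}(\Phi_i^\dagger\Phi_j)+z_{ij,kl}(\Phi_i^\dagger\Phi_j)(\Phi_k^\dagger\Phi_l)$ with coefficients satisfying $\mu_{ij}=\overline{\mu_{ji}}$ and $z_{ij,kl}=z_{kl,ij}=\overline{z_{ji,lk}}$. Then the number of independent (real) parameters of those potentials $V_H$ that are invariant under the action of $G$ (i.e. the real dimension of the subspace of coefficient pairs $(\mu,z)$ fixed by the induced action of $G$) equals the multiplicity of the trivial representation $\mathbf 1$ (the number of singlets) in the representation $$(\bar{\mathbf r}\otimes\mathbf r)\ \oplus\ \big[\mathrm{Sym}^2(\mathbf r)\otimes\mathrm{Sym}^2(\bar{\mathbf r})\big]\ \oplus\ \big[\mathrm{Alt}^2(\mathbf r)\otimes\mathrm{Alt}^2(\bar{\mathbf r})\big],$$ where the first summand is the contribution of $\mu_{ij}$ and the remaining two are the contribution of $z_{ij,kl}$.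
   Context: $\bar{\mathbf r}$ denotes the complex conjugate representation of $\mathbf r$; $\mathrm{Sym}^2(\mathbf r)$ and $\mathrm{Alt}^2(\mathbf r)$ denote the symmetric and antisymmetric parts of $\mathbf r\otimes\mathbf r$, so that $\mathbf r\otimes\mathbf r=\mathrm{Sym}^2(\mathbf r)\oplus\mathrm{Alt}^2(\mathbf r)$. All representations involved are unitary and hence decompose as direct sums of irreducible representations; the multiplicity of the trivial one-dimensional representation $\mathbf 1$ is the number of singlets. *)

(* Complex numbers are R[i] = complex R for a real closed
   field R (mathcomp-real-closed); taking R = the real numbers gives C. *)
From HB Require Import structures.
From mathcomp Require Import all_boot all_order all_algebra.
From mathcomp Require Import complex.
Set Implicit Arguments. Unset Strict Implicit. Unset Printing Implicit Defensive.
Import Order.TTheory GRing.Theory Num.Theory.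
Local Open Scope ring_scope.

Definition is_group (G : Type) (mul : G -> G -> G) (one : G) (inv : G -> G) :=
  [/\ forall x y z, mul x (mul y z) = mul (mul x y) z,
      forall x, mul one x = x, forall x, mul x one = x,
      forall x, mul (inv x) x = one & forall x, mul x (inv x) = one].

Definition unitary_rep (R : rcfType) (N : nat) (G : Type) (mul : G -> G -> G)
  (one : G) (r : G -> 'M[R[i]]_N) :=
  [/\ forall g h, r (mul g h) = r g *m r h,
      r one = 1%:M &
      forall g, (map_mx (fun x => x^*) (r g))^T *m r g = 1%:M].

(* d-dimensionality over a field K embedded in C via f, of a set S of
   finitely indexed families I -> C: S has a K-basis of d elements. *)
Definition dim_over (K : fieldType) (C : nzRingType) (f : K -> C) (I : finType)
  (S : (I -> C) -> Prop) (d : nat) :=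
  exists b : 'I_d -> I -> C,
    [/\ forall t, S (b t),
        forall a : 'I_d -> K,
          (forall x, \sum_(t < d) f (a t) * b t x = 0) -> forall t, a t = 0 &
        forall v, S v -> exists a : 'I_d -> K,
          forall x, v x = \sum_(t < d) f (a t) * b t x].

(* v (inl (i,j)) = mu_ij ;  v (inr (i,j,k,l)) = z_{ij,kl} *)
Definition coef_index (N : nat) : finType :=
  (('I_N * 'I_N) + ('I_N * 'I_N * 'I_N * 'I_N))%type.

Definition potential_coeffs (R : rcfType) (N : nat) (v : coef_index N -> R[i]) :=
  (forall i j : 'I_N, v (inl (i, j)) = (v (inl (j, i)))^*) /\
  (forall i j k l : 'I_N,
     v (inr (i, j, k, l)) = v (inr (k, l, i, j)) /\
     v (inr (i, j, k, l)) = (v (inr (j, i, l, k)))^*).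

(* Induced action of Phi_i |-> U_ij Phi_j on the coefficients:
   Phi_i^+ Phi_j |-> sum_ab conj(U_ia) U_jb Phi_a^+ Phi_b; the coefficients
   are fixed iff the transformed potential has the same coefficients. *)
Definition coeffs_fixed (R : rcfType) (N : nat) (U : 'M[R[i]]_N)
  (v : coef_index N -> R[i]) :=
  (forall a b : 'I_N,
     \sum_(i < N) \sum_(j < N) v (inl (i, j)) * (U i a)^* * U j b
     = v (inl (a, b))) /\
  (forall a b c d : 'I_N,
     \sum_(i < N) \sum_(j < N) \sum_(k < N) \sum_(l < N)
        v (inr (i, j, k, l)) * (U i a)^* * U j b * (U k c)^* * U l d
     = v (inr (a, b, c, d))).

Definition invariant_potentials (R : rcfType) (N : nat) (G : Type)
  (r : G -> 'M[R[i]]_N) (v : coef_index N -> R[i]) :=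
  potential_coeffs v /\ forall g, coeffs_fixed (r g) v.

(* inl (i,j)          : component e_i (x) e_j  of rbar (x) r
   inr (inl (i,k,j,l)): component e_i (x) e_k (x) e_j (x) e_l of r(x)r(x)rbar(x)rbar,
                        restricted to tensors symmetric in (i,k) and in (j,l)
   inr (inr (i,k,j,l)): same, restricted to tensors antisymmetric in (i,k)
                        and in (j,l). *)
Definition W_index (N : nat) : finType :=
  (('I_N * 'I_N) + (('I_N * 'I_N * 'I_N * 'I_N) + ('I_N * 'I_N * 'I_N * 'I_N)))%type.

Definition in_W (R : rcfType) (N : nat) (T : W_index N -> R[i]) :=
  (forall i k j l : 'I_N,
     T (inr (inl (i, k, j, l))) = T (inr (inl (k, i, j, l))) /\
     T (inr (inl (i, k, j, l))) = T (inr (inl (i, k, l, j)))) /\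
  (forall i k j l : 'I_N,
     T (inr (inr (i, k, j, l))) = - T (inr (inr (k, i, j, l))) /\
     T (inr (inr (i, k, j, l))) = - T (inr (inr (i, k, l, j)))).

(* action of U on W (matrix acting on column vectors: (U v)_i = sum_a U_ia v_a,
   conjugated on the rbar factors) *)
Definition W_act (R : rcfType) (N : nat) (U : 'M[R[i]]_N) (T : W_index N -> R[i])
  : W_index N -> R[i] :=
  fun x => match x with
  | inl (i, j) => \sum_(a < N) \sum_(b < N) (U i a)^* * U j b * T (inl (a, b))
  | inr (inl (i, k, j, l)) =>
      \sum_(a < N) \sum_(c < N) \sum_(b < N) \sum_(d < N)
        U i a * U k c * (U j b)^* * (U l d)^* * T (inr (inl (a, c, b, d)))
  | inr (inr (i, k, j, l)) =>
      \sum_(a < N) \sum_(c < N) \sum_(b < N) \sum_(d < N)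
        U i a * U k c * (U j b)^* * (U l d)^* * T (inr (inr (a, c, b, d)))
  end.

Definition W_fixed (R : rcfType) (N : nat) (G : Type) (r : G -> 'M[R[i]]_N)
  (T : W_index N -> R[i]) :=
  in_W T /\ forall g x, W_act (r g) T x = T x.

(* number of singlets (multiplicity of the trivial rep 1) in W, defined as
   dim_C Hom_G(1, W) = dim_C W^G *)
Definition singlet_count (R : rcfType) (N : nat) (G : Type)
  (r : G -> 'M[R[i]]_N) (m : nat) :=
  dim_over (@id R[i]) (W_fixed r) m.

(* Since the Hermiticity conditions say that the coefficient vector v = (mu, z) is fixed
   by the antilinear involution v |-> conj (v o dagger), and this involution commutes with
   the induced action of G, the G-invariant potentials form a real form of the complex space
   of pair-symmetric G-fixed coefficient vectors: a real basis of the former is a complex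
   basis of the latter.  Splitting z_{ij,kl} into its parts symmetric and antisymmetric under
   i <-> k identifies the pair-symmetric coefficients with
   (rbar (x) r) (+) [Sym2 r (x) Sym2 rbar] (+) [Alt2 r (x) Alt2 rbar], intertwining the action
   of r g on W with the induced action of r (g^-1), the adjoint of r g, on coefficients; so the G-fixed
   coefficients correspond exactly to the singlets in W. *)

From HB Require Import structures.
From mathcomp Require Import all_boot all_order all_algebra.
From mathcomp Require Import complex ring.
From Stdlib Require Import Classical FunctionalExtensionality.
Set Implicit Arguments. Unset Strict Implicit. Unset Printing Implicit Defensive.
Import Order.TTheory GRing.Theory Num.Theory.
Local Open Scope ring_scope.

Lemma row_free_col_mx (K : fieldType) (d m : nat) (B : 'M[K]_(d, m)) (v : 'rV_m) :
  row_free B -> ~~ (v <= B)%MS -> row_free (col_mx B v).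
Proof.
move=> freeB vB; rewrite /row_free eqn_leq rank_leq_row -addsmxE.
have ltB : (B < B + v)%MS.
  by rewrite ltmxE addsmxSl; apply: contra vB; apply: submx_trans (addsmxSr B v).
by apply: leq_trans (rank_ltmx ltB); rewrite (eqP freeB) addn1.
Qed.

Lemma exists_free_spanning_rows (K : fieldType) (m : nat) (S : 'rV[K]_m -> Prop) :
  exists d (B : 'M[K]_(d, m)),
    [/\ forall t, S (row t B), row_free B & forall v, S v -> (v <= B)%MS].
Proof.
pose free_in d := exists B : 'M[K]_(d, m), (forall t, S (row t B)) /\ row_free B.
have free_in0 : free_in 0%N.
  by exists 0; split; [case | rewrite /row_free eqn_leq rank_leq_row].
have free_in_le d : free_in d -> (d <= m)%N.
  by case=> B [_ /eqP <-]; apply: rank_leq_col.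
have [d [[B [SB freeB]] maxd]] : exists d, free_in d /\ ~ free_in (d + 1)%N.
  apply: NNPP => nomax; suff : free_in m.+1 by move/free_in_le; rewrite ltnn.
  elim: m.+1 => // n IHn; apply: NNPP => nfree.
  by apply: nomax; exists n; rewrite addn1.
exists d, B; split=> // v Sv; have [//|vB] := boolP (v <= B)%MS; case: maxd.
exists (col_mx B v); split; last exact: row_free_col_mx.
move=> t; rewrite -(splitK t); case: (split t) => j /=.
- by rewrite rowKu.
- by rewrite rowKd row_id.
Qed.

Section Realification.
Variables (R : rcfType) (I : finType).
Local Notation n := #|I|.

Definition complexify (u : 'rV[R]_(n + n)) : I -> R[i] :=
  fun x => (u 0 (lshift n (enum_rank x)) +i* u 0 (rshift n (enum_rank x)))%C.

Definition realify (v : I -> R[i]) : 'rV[R]_(n + n) :=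
  row_mx (\row_j complex.Re (v (enum_val j))) (\row_j complex.Im (v (enum_val j))).

Lemma realifyK : cancel realify complexify.
Proof.
move=> v; apply: functional_extensionality => x.
by rewrite /complexify row_mxEl row_mxEr !mxE enum_rankK; case: (v x).
Qed.

Lemma complexify_mulmx (d : nat) (a : 'rV[R]_d) (B : 'M[R]_(d, n + n)) x :
  complexify (a *m B) x = \sum_(t < d) real_complex R (a 0 t) * complexify (row t B) x.
Proof.
apply/eqP; rewrite eq_complex !raddf_sum /= !mxE.
by apply/andP; split; apply/eqP; apply: eq_bigr => t _; rewrite !mxE /=; ring.
Qed.

Lemma complexify_eq0 u : (forall x, complexify u x = 0) -> u = 0.
Proof.
move=> u0; apply/rowP => j; rewrite mxE -(splitK j).
case: (split j) => k /=; have /eqP := u0 (enum_val k);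
  by rewrite eq_complex /complexify /= enum_valK => /andP [/eqP ? /eqP ?].
Qed.

Lemma exists_dim_over_real (S : (I -> R[i]) -> Prop) :
  exists d, dim_over (real_complex R) S d.
Proof.
have [d [B [SB freeB spanB]]] := exists_free_spanning_rows (fun u => S (complexify u)).
exists d, (fun t => complexify (row t B)); split=> //.
- move=> a a0 t; have : (\row_s a s) *m B = 0.
    apply: complexify_eq0 => x; rewrite complexify_mulmx -[RHS](a0 x).
    by apply: eq_bigr => s _; rewrite mxE.
  by move/eqP; rewrite mulmx_free_eq0 // => /eqP/rowP/(_ t); rewrite !mxE.
- move=> v Sv; have /submxP [a av] : (realify v <= B)%MS by apply: spanB; rewrite realifyK.
  exists (fun t => a 0 t) => x.
  by rewrite -complexify_mulmx -av realifyK.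
Qed.

End Realification.

Section RealForm.
Variables (R : rcfType) (I : finType) (sw : I -> I).
Hypothesis swK : involutive sw.
Variables (V S : (I -> R[i]) -> Prop).
Hypothesis V_comb : forall (x z : R[i]) v w, V v -> V w -> V (fun y => x * v y + z * w y).
Hypothesis V_conj : forall v, V v -> V (fun y => (v (sw y))^*).
Hypothesis S_real : forall v, S v <-> V v /\ forall y, (v (sw y))^* = v y.

Lemma S_comb_conj c w : V w -> S (fun y => c * w y + c^* * (w (sw y))^*).
Proof.
move=> Vw; apply/S_real; split; first by apply: V_comb => //; apply: V_conj.
by move=> y; rewrite swK rmorphD !rmorphM /= !conjCK addrC.
Qed.

Lemma dim_over_real_form d : dim_over (real_complex R) S d -> dim_over id V d.
Proof.
case=> e [Se e_free e_span]; have [Ve e_real] := all_and2 (fun t => iffLR (S_real _) (Se t)).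
exists e; split=> //.
- move=> a a0.
  have aJ0 y : \sum_(t < _) (a t)^* * e t y = 0.
    transitivity ((\sum_t a t * e t (sw y))^*); last by rewrite a0 conjC0.
    by rewrite rmorph_sum; apply: eq_bigr => t _; rewrite rmorphM /= e_real.
  have Re0 : forall t, complex.Re (a t) = 0.
    apply: e_free => y; transitivity ((\sum_t a t * e t y + \sum_t (a t)^* * e t y) / 2).
      by rewrite -big_split mulr_suml; apply: eq_bigr => t _; rewrite /= complexRe ReE; ring.
    by rewrite a0 aJ0 addr0 mul0r.
  have Im0 : forall t, complex.Im (a t) = 0.
    apply: e_free => y; transitivity ('i * (\sum_t (a t)^* * e t y - \sum_t a t * e t y) / 2).
      by rewrite -sumrB mulr_sumr mulr_suml; apply: eq_bigr => t _; rewrite /= complexIm ImE; ring.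
    by rewrite a0 aJ0 subrr mulr0 mul0r.
  by move=> t; rewrite [a t]complexE Re0 Im0 mulr0 addr0.
- move=> w Vw.
  (* [w = v1 + 'i * v2] with [v1], [v2] fixed by the involution, as [z = 'Re z + 'i * 'Im z]. *)
  have [al /= alE] := e_span _ (S_comb_conj 2^-1 Vw).
  have [be /= beE] := e_span _ (S_comb_conj (- 'i / 2) Vw).
  exists (fun t => real_complex R (al t) + 'i * real_complex R (be t)) => y.
  have -> : w y = (2^-1 * w y + 2^-1^* * (w (sw y))^*) +
                  'i * ((- 'i / 2) * w y + (- 'i / 2)^* * (w (sw y))^*).
    rewrite rmorphM rmorphN !fmorphV /= conjCi !conjC_nat opprK.
    have ii : 'i * 'i = -1 :> R[i] by rewrite -expr2 sqrCi.
    by field: ii.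
  by rewrite alE beE mulr_sumr -big_split; apply: eq_bigr => t _ /=; ring.
Qed.

End RealForm.

Section Transport.
Variables (K : fieldType) (C : nzRingType) (f : K -> C) (I J : finType).
Variables (S : (I -> C) -> Prop) (T : (J -> C) -> Prop).
Variables (phi : (I -> C) -> J -> C) (psi : (J -> C) -> I -> C).
Hypothesis phi_sum : forall d (c : 'I_d -> K) (u : 'I_d -> I -> C) x,
  phi (fun y => \sum_(t < d) f (c t) * u t y) x = \sum_(t < d) f (c t) * phi (u t) x.
Hypothesis psi_sum : forall d (c : 'I_d -> K) (u : 'I_d -> J -> C) y,
  psi (fun x => \sum_(t < d) f (c t) * u t x) y = \sum_(t < d) f (c t) * psi (u t) y.
Hypothesis phi_S : forall v, S v -> T (phi v).
Hypothesis psi_T : forall w, T w -> S (psi w).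
Hypothesis phiK : forall v, S v -> forall y, psi (phi v) y = v y.
Hypothesis psiK : forall w, T w -> forall x, phi (psi w) x = w x.

Lemma dim_over_transport d : dim_over f S d -> dim_over f T d.
Proof.
case=> b [Sb b_free b_span]; exists (fun t => phi (b t)); split=> [t | a a0 | w Tw].
- exact/phi_S.
- apply: b_free => y; transitivity (psi (fun x => \sum_(t < d) f (a t) * phi (b t) x) y).
    by rewrite psi_sum; apply: eq_bigr => t _; rewrite phiK.
  have -> : (fun x => \sum_(t < d) f (a t) * phi (b t) x) = (fun x => \sum_(t < 0) f 0 * 0).
    by apply: functional_extensionality => x; rewrite a0 big_ord0.
  by rewrite psi_sum big_ord0.
- have [a av] := b_span _ (psi_T Tw); exists a => x; rewrite -(psiK Tw x).
  have -> : psi w = (fun y => \sum_(t < d) f (a t) * b t y) by apply: functional_extensionality.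
  exact: phi_sum.
Qed.

End Transport.

Section NestedSums.
Variable I : finType.

Lemma big_split4 (V : nmodType) (F G : I -> I -> I -> I -> V) :
  \sum_a \sum_b \sum_c \sum_d (F a b c d + G a b c d) =
  \sum_a \sum_b \sum_c \sum_d F a b c d + \sum_a \sum_b \sum_c \sum_d G a b c d.
Proof.
rewrite -big_split; apply: eq_bigr => a _; rewrite -big_split.
by apply: eq_bigr => b _; rewrite -big_split; apply: eq_bigr => c _; rewrite -big_split.
Qed.

Lemma sumrB4 (V : zmodType) (F G : I -> I -> I -> I -> V) :
  \sum_a \sum_b \sum_c \sum_d (F a b c d - G a b c d) =
  \sum_a \sum_b \sum_c \sum_d F a b c d - \sum_a \sum_b \sum_c \sum_d G a b c d.
Proof.
rewrite -sumrB; apply: eq_bigr => a _; rewrite -sumrB.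
by apply: eq_bigr => b _; rewrite -sumrB; apply: eq_bigr => c _; rewrite -sumrB.
Qed.

Lemma mulr_sum4r (S : pzSemiRingType) (x : S) (F : I -> I -> I -> I -> S) :
  x * \sum_a \sum_b \sum_c \sum_d F a b c d = \sum_a \sum_b \sum_c \sum_d (x * F a b c d).
Proof.
rewrite mulr_sumr; apply: eq_bigr => a _; rewrite mulr_sumr.
by apply: eq_bigr => b _; rewrite mulr_sumr; apply: eq_bigr => c _; rewrite mulr_sumr.
Qed.

Lemma exchange_big_mid (V : nmodType) (F : I -> I -> I -> I -> V) :
  \sum_a \sum_b \sum_c \sum_d F a b c d = \sum_a \sum_c \sum_b \sum_d F a b c d.
Proof. by apply: eq_bigr => a _; apply: exchange_big. Qed.

Lemma raddf_sum4 (U V : nmodType) (f : {additive U -> V}) (F : I -> I -> I -> I -> U) :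
  f (\sum_a \sum_b \sum_c \sum_d F a b c d) = \sum_a \sum_b \sum_c \sum_d f (F a b c d).
Proof.
rewrite raddf_sum; apply: eq_bigr => a _; rewrite raddf_sum.
by apply: eq_bigr => b _; rewrite raddf_sum; apply: eq_bigr => c _; rewrite raddf_sum.
Qed.

End NestedSums.

Section HiggsCoefficients.
Variables (R : rcfType) (N : nat).
Local Notation C := R[i].

Definition coef_act (U : 'M[C]_N) (v : coef_index N -> C) : coef_index N -> C :=
  fun y => match y with
  | inl (a, b) => \sum_(i < N) \sum_(j < N) v (inl (i, j)) * (U i a)^* * U j b
  | inr (a, b, c, d) =>
      \sum_(i < N) \sum_(j < N) \sum_(k < N) \sum_(l < N)
        v (inr (i, j, k, l)) * (U i a)^* * U j b * (U k c)^* * U l d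
  end.

Lemma coeffs_fixedE (U : 'M[C]_N) v : coeffs_fixed U v <-> forall y, coef_act U v y = v y.
Proof.
split=> [[fix2 fix4] [[a b]|[[[a b] c] d]] | fixv]; [exact: fix2 | exact: fix4 |].
by split=> [a b | a b c d]; [exact: (fixv (inl (a, b))) | exact: (fixv (inr (a, b, c, d)))].
Qed.

Lemma coef_act_comb (U : 'M[C]_N) (x z : C) v w y :
  coef_act U (fun y => x * v y + z * w y) y = x * coef_act U v y + z * coef_act U w y.
Proof.
case: y => [[a b]|[[[a b] c] d]] /=.
- rewrite !mulr_sumr -big_split; apply: eq_bigr => i _.
  by rewrite !mulr_sumr -big_split; apply: eq_bigr => j _ /=; ring.
- rewrite !mulr_sum4r -big_split4.
  by do 4!apply: eq_bigr => ? _ /=; ring.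
Qed.

Definition coef_dagger (y : coef_index N) : coef_index N :=
  match y with
  | inl (i, j) => inl (j, i)
  | inr (i, j, k, l) => inr (j, i, l, k)
  end.

Lemma coef_daggerK : involutive coef_dagger.
Proof. by case=> [[i j]|[[[i j] k] l]]. Qed.

Lemma coef_act_conj (U : 'M[C]_N) v y :
  coef_act U (fun y => (v (coef_dagger y))^*) y = (coef_act U v (coef_dagger y))^*.
Proof.
case: y => [[a b]|[[[a b] c] d]] /=.
- rewrite [in RHS]exchange_big rmorph_sum; apply: eq_bigr => i _.
  rewrite rmorph_sum; apply: eq_bigr => j _.
  by rewrite !rmorphM /= conjCK; ring.
- rewrite raddf_sum4 [RHS]exchange_big; apply: eq_bigr => i _; apply: eq_bigr => j _.
  rewrite [RHS]exchange_big; apply: eq_bigr => k _; apply: eq_bigr => l _.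
  by rewrite /= !rmorphM /= !conjCK; ring.
Qed.

Definition pair_symmetric (v : coef_index N -> C) :=
  forall i j k l, v (inr (i, j, k, l)) = v (inr (k, l, i, j)).

Lemma potential_coeffsE v :
  potential_coeffs v <-> pair_symmetric v /\ forall y, (v (coef_dagger y))^* = v y.
Proof.
split=> [[herm2 herm4] | [sym4 herm]].
- split=> [i j k l | [[i j]|[[[i j] k] l]]]; first by case: (herm4 i j k l).
  + by rewrite [RHS]herm2.
  + by case: (herm4 i j k l) => _ ->.
- split=> [i j | i j k l]; first by rewrite -(herm (inl (i, j))).
  by split=> //; rewrite -(herm (inr (i, j, k, l))).
Qed.

(* The [z] part is split into its symmetric and antisymmetric parts under [i <-> k];
   pair symmetry of [z] then makes them (anti)symmetric in [j <-> l] as well. *)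
Definition coef_to_W (v : coef_index N -> C) : W_index N -> C :=
  fun x => match x with
  | inl (i, j) => v (inl (j, i))
  | inr (inl (i, k, j, l)) => v (inr (i, j, k, l)) + v (inr (k, j, i, l))
  | inr (inr (i, k, j, l)) => v (inr (i, j, k, l)) - v (inr (k, j, i, l))
  end.

Definition W_to_coef (T : W_index N -> C) : coef_index N -> C :=
  fun y => match y with
  | inl (i, j) => T (inl (j, i))
  | inr (i, j, k, l) => (T (inr (inl (i, k, j, l))) + T (inr (inr (i, k, j, l)))) / 2
  end.

Lemma coef_to_W_in_W v : pair_symmetric v -> in_W (coef_to_W v).
Proof.
move=> sym4; split=> i k j l /=.
- by rewrite addrC (sym4 i l k j) (sym4 k l i j) addrC.
- by rewrite opprB (sym4 i l k j) (sym4 k l i j) opprB.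
Qed.

Lemma W_to_coef_pair_symmetric T : in_W T -> pair_symmetric (W_to_coef T).
Proof.
case=> symW altW i j k l /=.
case: (symW k i l j) => -> _; case: (symW i k l j) => _ ->.
by case: (altW k i l j) => -> _; case: (altW i k l j) => _ ->; rewrite opprK.
Qed.

Lemma coef_to_WK v y : W_to_coef (coef_to_W v) y = v y.
Proof. by case: y => [[i j]|[[[i j] k] l]] //=; field. Qed.

Lemma W_to_coefK T : in_W T -> forall x, coef_to_W (W_to_coef T) x = T x.
Proof.
case=> symW altW [[i j]|[[[[i k] j] l]|[[[i k] j] l]]] //=.
all: by case: (symW k i j l) => -> _; case: (altW k i j l) => -> _; field.
Qed.

Lemma W_act_coef_to_W (U V : 'M[C]_N) v x :
  (forall i a, V i a = (U a i)^*) ->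
  W_act U (coef_to_W v) x = coef_to_W (coef_act V v) x.
Proof.
move=> VU; case: x => [[i j]|[[[[i k] j] l]|[[[i k] j] l]]] /=.
- rewrite [RHS]exchange_big; do 2!apply: eq_bigr => ? _.
  by rewrite !VU conjCK; ring.
- rewrite [X in _ = X + _]exchange_big_mid [X in _ = _ + X]exchange_big_mid.
  rewrite [X in _ = _ + X]exchange_big -big_split4; do 4!apply: eq_bigr => ? _.
  by rewrite !VU !conjCK; ring.
- rewrite [X in _ = X - _]exchange_big_mid [X in _ = _ - X]exchange_big_mid.
  rewrite [X in _ = _ - X]exchange_big -sumrB4; do 4!apply: eq_bigr => ? _.
  by rewrite !VU !conjCK; ring.
Qed.

Lemma coef_to_W_fixed (U V : 'M[C]_N) v :
  (forall i a, V i a = (U a i)^*) -> coeffs_fixed V v ->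
  forall x, W_act U (coef_to_W v) x = coef_to_W v x.
Proof.
move=> VU /coeffs_fixedE fixv x; rewrite (W_act_coef_to_W _ _ VU).
by have -> : coef_act V v = v by apply: functional_extensionality.
Qed.

Lemma W_to_coef_fixed (U V : 'M[C]_N) T :
  (forall i a, V i a = (U a i)^*) -> in_W T -> (forall x, W_act V T x = T x) ->
  coeffs_fixed U (W_to_coef T).
Proof.
move=> VU inT fixT; apply/coeffs_fixedE => y; rewrite -coef_to_WK.
have UV i a : U i a = (V a i)^* by rewrite VU conjCK.
suff -> : coef_to_W (coef_act U (W_to_coef T)) = T by [].
apply: functional_extensionality => x; rewrite -(W_act_coef_to_W _ _ UV) -fixT.
by have -> : coef_to_W (W_to_coef T) = T by apply: functional_extensionality; apply: W_to_coefK.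
Qed.

Lemma coef_to_W_sum d (c : 'I_d -> C) (u : 'I_d -> coef_index N -> C) x :
  coef_to_W (fun y => \sum_(t < d) c t * u t y) x = \sum_(t < d) c t * coef_to_W (u t) x.
Proof.
case: x => [[i j]|[[[[i k] j] l]|[[[i k] j] l]]] //=.
- by rewrite -big_split; apply: eq_bigr => t _; rewrite mulrDr.
- by rewrite -sumrB; apply: eq_bigr => t _; rewrite mulrBr.
Qed.

Lemma W_to_coef_sum d (c : 'I_d -> C) (u : 'I_d -> W_index N -> C) y :
  W_to_coef (fun x => \sum_(t < d) c t * u t x) y = \sum_(t < d) c t * W_to_coef (u t) y.
Proof.
case: y => [[i j]|[[[i j] k] l]] //=.
by rewrite -big_split mulr_suml; apply: eq_bigr => t _ /=; ring.
Qed.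

Lemma coeffs_fixed_comb (U : 'M[C]_N) (x z : C) v w :
  coeffs_fixed U v -> coeffs_fixed U w -> coeffs_fixed U (fun y => x * v y + z * w y).
Proof.
move=> /coeffs_fixedE fixv /coeffs_fixedE fixw; apply/coeffs_fixedE => y.
by rewrite coef_act_comb fixv fixw.
Qed.

Lemma coeffs_fixed_dagger (U : 'M[C]_N) v :
  coeffs_fixed U v -> coeffs_fixed U (fun y => (v (coef_dagger y))^*).
Proof. by move=> /coeffs_fixedE fixv; apply/coeffs_fixedE => y; rewrite coef_act_conj fixv. Qed.

End HiggsCoefficients.

Lemma unitary_rep_inv (R : rcfType) (N : nat) (G : Type) (mul : G -> G -> G) (one : G)
    (inv : G -> G) (r : G -> 'M[R[i]]_N) :
  is_group mul one inv -> unitary_rep mul one r ->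
  forall g i a, r (inv g) i a = (r g a i)^*.
Proof.
case=> _ _ _ _ mulgV [rM r1 r_unitary] g i a.
suff -> : r (inv g) = (map_mx Num.conj (r g))^T by rewrite !mxE.
by rewrite -[LHS]mul1mx -(r_unitary g) -mulmxA -rM mulgV r1 mulmx1.
Qed.

Section Invariants.
Variables (R : rcfType) (N : nat) (G : Type) (r : G -> 'M[R[i]]_N) (inv : G -> G).
Hypothesis r_inv : forall g i a, r (inv g) i a = (r g a i)^*.

Definition invariant_coeffs (v : coef_index N -> R[i]) :=
  pair_symmetric v /\ forall g, coeffs_fixed (r g) v.

Lemma dim_over_invariant_coeffs d :
  dim_over (real_complex R) (invariant_potentials r) d -> dim_over id invariant_coeffs d.
Proof.
apply: (dim_over_real_form (@coef_daggerK N)).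
- move=> x z v w [symv fixv] [symw fixw]; split=> [i j k l | g].
  + by rewrite symv symw.
  + exact: coeffs_fixed_comb.
- move=> v [symv fixv]; split=> [i j k l | g]; first by rewrite /= symv.
  exact: coeffs_fixed_dagger.
- move=> v; rewrite /invariant_potentials potential_coeffsE /invariant_coeffs.
  by split=> [[[symv realv] fixv] | [[symv fixv] realv]].
Qed.

Lemma singlet_count_invariant_coeffs d : dim_over id invariant_coeffs d -> singlet_count r d.
Proof.
apply: (dim_over_transport (@coef_to_W_sum R N) (@W_to_coef_sum R N)).
- move=> v [symv fixv]; split; first exact: coef_to_W_in_W.
  by move=> g; apply: coef_to_W_fixed (r_inv g) (fixv (inv g)).
- move=> T [inT fixT]; split; first exact: W_to_coef_pair_symmetric.
  by move=> g; apply: W_to_coef_fixed (r_inv g) inT (fixT (inv g)).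
- by move=> v _; apply: coef_to_WK.
- by move=> T [inT _]; apply: W_to_coefK.
Qed.

End Invariants.

Theorem theorem5 (R : rcfType) (N : nat) (G : Type) (mul : G -> G -> G)
  (one : G) (inv : G -> G) (r : G -> 'M[R[i]]_N) :
  (1 <= N)%N -> is_group mul one inv -> unitary_rep mul one r ->
  exists d : nat,
    dim_over (@real_complex_def R (Phant R)) (invariant_potentials r) d /\
    singlet_count r d.
Proof.
move=> _ groupG rep_r; have r_inv := unitary_rep_inv groupG rep_r.
have [d real_d] := exists_dim_over_real (invariant_potentials r).
exists d; split=> //; apply: (singlet_count_invariant_coeffs r_inv).
exact: dim_over_invariant_coeffs.
Qed.
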